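(* Let $N, J \ge 1$ be integers and let $F_1,\dots,F_J:\mathbb{R}_+^N\to\mathbb{R}_+$ be upper semicontinuous, concave functions that are homogeneous of degree 1. Let $x\in\mathbb{R}_+^N$. Then there exist $x_1,\dots,x_J\in\mathbb{R}_+^N$ with $\sum_{j=1}^J x_j=x$ attaining $$\max\Big\{\sum_{j=1}^J F_j(y_j): y_j\in\mathbb{R}_+^N \text{ for all } j,\ \sum_{j=1}^J y_j=x\Big\}$$ such that $x_j\neq 0$ for at most $N$ indices $j$.
   Context: Homogeneous of degree 1 means $F_j(\lambda x)=\lambda F_j(x)$ for all $\lambda\ge0$, $x\in\mathbb{R}_+^N$. *)

From HB Require Import structures.
From mathcomp Require Import all_boot all_order all_algebra.
From mathcomp Require Import reals.
Set Implicit Arguments. Unset Strict Implicit. Unset Printing Implicit Defensive.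
Import Order.TTheory GRing.Theory Num.Theory.
Local Open Scope ring_scope.

Definition nonneg_vec (R : realType) (N : nat) (x : 'rV[R]_N) : Prop :=
  forall i : 'I_N, 0 <= x ord0 i.

(* Functions R_+^N -> R_+ are represented as functions on 'rV_N; only their
   values on the orthant matter. *)
Definition nonneg_valued (R : realType) (N : nat) (F : 'rV[R]_N -> R) : Prop :=
  forall x, nonneg_vec x -> 0 <= F x.

(* upper semicontinuity of F on R_+^N (relative topology of the orthant;
   the sup-norm is used, all norms on R^N being equivalent) *)
Definition usc_orthant (R : realType) (N : nat) (F : 'rV[R]_N -> R) : Prop :=
  forall x, nonneg_vec x -> forall e : R, 0 < e ->
    exists2 d : R, 0 < d & forall y, nonneg_vec y ->
      (forall i : 'I_N, `|y ord0 i - x ord0 i| < d) -> F y < F x + e.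

Definition concave_orthant (R : realType) (N : nat) (F : 'rV[R]_N -> R) : Prop :=
  forall x y, nonneg_vec x -> nonneg_vec y -> forall t : R, 0 <= t <= 1 ->
    t * F x + (1 - t) * F y <= F (t *: x + (1 - t) *: y).

Definition homogeneous1 (R : realType) (N : nat) (F : 'rV[R]_N -> R) : Prop :=
  forall (l : R) x, 0 <= l -> nonneg_vec x -> F (l *: x) = l * F x.

(* An optimal allocation exists: the allocations of [x] form a compact set on
   which the total value is upper semicontinuous, and bounded since each [F j],
   being nonnegative and superadditive, is monotone on the orthant.  If more than
   [N] components of an optimal allocation are nonzero, they are linearly
   dependent, say [sum_j d_j x_j = 0]; by homogeneity the value of
   [((1 + s d_j) x_j)_j] is affine in [s], so optimality forces it to be
   constant on [[-1, 1]], and at the endpoint where the largest [|d_j|] is hit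
   one more component vanishes.  Iterating yields a sparse optimum. *)

From HB Require Import structures.
From mathcomp Require Import all_boot all_order all_algebra.
From mathcomp Require Import classical_sets boolp reals topology normedtype.
From mathcomp Require Import lra.
Import Order.TTheory GRing.Theory Num.Theory.
Import numFieldNormedType.Exports.
Set Implicit Arguments. Unset Strict Implicit. Unset Printing Implicit Defensive.
Local Open Scope ring_scope.

Lemma ltr_sum_eps (R : numFieldType) (I : finType) (a b : I -> R) (e : R) : 0 < e ->
  (forall i, a i < b i + e / #|I|.+1%:R) -> \sum_i a i < \sum_i b i + e.
Proof.
move=> e0 hab; apply: le_lt_trans (ler_sum _ (fun i _ => ltW (hab i))) _.
rewrite big_split /= sumr_const ltrD2l -[_ *+ _]mulr_natr mulrAC.
by rewrite ltr_pdivrMr ?ltr0Sn // ltr_pM2l // ltr_nat.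
Qed.

Section Topology.
Local Open Scope classical_set_scope.

Lemma compact_usc_max (T : topologicalType) (R : realType) (K : set T) (f : T -> R) :
  compact K -> K !=set0 -> (exists M, forall p, K p -> f p <= M) ->
  (forall p, K p -> forall e, 0 < e -> \forall q \near p, K q -> f q < f p + e) ->
  exists2 p, K p & forall q, K q -> f q <= f p.
Proof.
move=> cK [p0 Kp0] [M hM] usc.
have supV : has_sup (f @` K).
  by split; [exists (f p0), p0 | exists M => _ [p Kp <-]; exact: hM].
pose V := sup (f @` K).
pose B e := [set q | K q /\ V - e < f q].
pose Fl := filter_from [set e : R | 0 < e] B.
have FlF : ProperFilter Fl.
  apply: filter_from_proper => [|e e0]; last first.
    by have [_ [q Kq <-] hq] := sup_adherent e0 supV; exists q.
  apply: filter_from_filter => [|e1 e2 e10 e20]; first by exists 1 => /=.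
  exists (Num.min e1 e2); first by rewrite /= lt_min e10 e20.
  by move=> q [Kq hq]; split; split => //; apply: le_lt_trans hq;
    rewrite lerD2l lerN2 ge_min lexx ?orbT.
have [p [Kp clp]] : K `&` cluster Fl !=set0.
  by apply: cK; exists 1 => //= q [].
exists p => // q Kq; apply: le_trans (sup_upper_bound supV _) _; first by exists q.
rewrite leNgt; apply/negP => hlt; pose e := (V - f p) / 2.
have e0 : 0 < e by rewrite divr_gt0 // subr_gt0.
have FlB : Fl (B e) by exists e.
have [r [[Kr hr] /(_ Kr) hr']] := clp _ _ FlB (usc p Kp e e0).
by move: hr hr'; rewrite /e; lra.
Qed.

Lemma nbhs_row_box (R : numFieldType) (N : nat) (w0 : 'rV[R]_N) (d : R) : 0 < d ->
  nbhs w0 [set w | forall i, `|w ord0 i - w0 ord0 i| < d].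
Proof.
move=> d0; exists (fun _ i => ball (w0 ord0 i) d).
  by move=> i j; rewrite (ord1 i); apply: nbhsx_ballx.
by move=> w /= w_ball i; have := w_ball ord0 i; rewrite /ball /= distrC.
Qed.

Lemma nbhs_row_coord (T : topologicalType) (J : nat) (p : 'rV[T]_J) (P : 'I_J -> set T) :
  (forall j, nbhs (p ord0 j) (P j)) -> nbhs p [set v | forall j, P j (v ord0 j)].
Proof.
move=> P_nbhs; exists (fun _ j => P j) => [i j|v /= Pv j]; last exact: Pv.
by rewrite (ord1 i).
Qed.

Lemma closed_row_sum (R : realType) (N J : nat) (x : 'rV[R]_N) :
  closed [set v : 'rV['rV[R]_N]_J | \sum_j v ord0 j = x].
Proof.
move=> p clp; apply/rowP => i; rewrite summxE; apply/eqP; apply: contraT => neq_px.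
pose dl := `|\sum_j p ord0 j ord0 i - x ord0 i|.
have dl0 : 0 < dl by rewrite normr_gt0 subr_eq0.
have e0 : 0 < dl / #|'I_J|.+1%:R by rewrite divr_gt0.
have [v [v_sum v_near]] := clp _ (nbhs_row_coord (fun j => nbhs_row_box (p ord0 j) e0)).
have : dl < \sum_(j : 'I_J) 0 + dl.
  rewrite {1}/dl -v_sum summxE -sumrB; apply: le_lt_trans (ler_norm_sum _ _ _) _.
  by apply: ltr_sum_eps => // j; rewrite add0r distrC; apply: v_near.
by rewrite big1 // add0r ltxx.
Qed.

End Topology.

Lemma exists_linear_relation (K : fieldType) (vT : vectType K) (I : finType)
    (S : {set I}) (v : I -> vT) : (\dim {:vT} < #|S|)%N ->
  exists c : I -> K, [/\ \sum_i c i *: v i = 0, exists i, c i != 0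
                       & forall i, i \notin S -> c i = 0].
Proof.
move=> ltdS; have [i0 Si0] : {i0 | i0 \in S}.
  by apply/sigW/card_gt0P; apply: leq_ltn_trans ltdS.
pose X := [tuple v (enum_val a) | a < #|S|].
have notfreeX : ~~ free X.
  rewrite /free size_tuple neq_ltn; apply/orP; left.
  by apply: leq_ltn_trans (dimvS (subvf _)) ltdS.
have [k [k0 [a ka]]] : exists k, \sum_(a < #|S|) k a *: X`_a = 0 /\ exists a, k a != 0.
  apply/not_existsP => /= H; move/freeP: notfreeX; apply => k k0 a.
  by apply/eqP/negPn/negP => ka; apply: (H k); split => //; exists a.
pose c i := if i \in S then k (enum_rank_in Si0 i) else 0.
exists c; split.
- rewrite (bigID (mem S)) /= [X in _ + X]big1 ?addr0 => [|i /negbTE]; last first.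
    by rewrite /c => ->; rewrite scale0r.
  rewrite big_enum_val -[RHS]k0; apply: eq_bigr => b _.
  by rewrite /c enum_valP enum_valK_in -tnth_nth tnth_map tnth_ord_tuple.
- by exists (enum_val a); rewrite /c enum_valP enum_valK_in.
- by move=> i /negbTE; rewrite /c => ->.
Qed.

Section HomogeneousConcave.
Variables (R : realType) (N : nat) (F : 'rV[R]_N -> R).
Hypotheses (Fconc : concave_orthant F) (Fhom : homogeneous1 F).

Lemma nonneg_vecZ (a : R) (y : 'rV[R]_N) : 0 <= a -> nonneg_vec y -> nonneg_vec (a *: y).
Proof. by move=> a0 hy i; rewrite mxE mulr_ge0. Qed.

(* Concavity at the midpoint of [2 *: y] and [2 *: z], then homogeneity. *)
Lemma concave_homogeneous_superadd y z : nonneg_vec y -> nonneg_vec z ->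
  F y + F z <= F (y + z).
Proof.
move=> hy hz; have two_ge0 : 0 <= 2 :> R by [].
have half : 1 - 2^-1 = 2^-1 :> R by lra.
have := Fconc (nonneg_vecZ two_ge0 hy) (nonneg_vecZ two_ge0 hz) (t := 2^-1).
rewrite !Fhom // half !scalerA !mulrA mulVf ?pnatr_eq0 // !mul1r !scale1r; apply.
by apply/andP; split; lra.
Qed.

Lemma concave_homogeneous_monotone y z : nonneg_valued F ->
  nonneg_vec y -> nonneg_vec z -> F y <= F (y + z).
Proof.
move=> Fpos hy hz; apply: le_trans (concave_homogeneous_superadd hy hz).
by rewrite lerDl Fpos.
Qed.
End HomogeneousConcave.

Section Allocation.
Variables (R : realType) (N J : nat) (F : 'I_J -> 'rV[R]_N -> R) (x : 'rV[R]_N).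

Definition allocation (ys : 'I_J -> 'rV[R]_N) :=
  (forall j, nonneg_vec (ys j)) /\ \sum_j ys j = x.

Definition value (ys : 'I_J -> 'rV[R]_N) := \sum_j F j (ys j).

Definition optimal (xs : 'I_J -> 'rV[R]_N) :=
  allocation xs /\ forall ys, allocation ys -> value ys <= value xs.

Definition support (xs : 'I_J -> 'rV[R]_N) := [set j | xs j != 0]%SET.

Section Sparsify.
Hypothesis Fhom : forall j, homogeneous1 (F j).

Lemma allocation_shift xs (d : 'I_J -> R) (s : R) : allocation xs ->
    \sum_j d j *: xs j = 0 -> (forall j, 0 <= 1 + s * d j) ->
  let ys j := (1 + s * d j) *: xs j in
  allocation ys /\ value ys = value xs + s * \sum_j d j * F j (xs j).
Proof.
move=> [xs_ge0 xs_sum] d0 hs ys; rewrite /ys; split; first split.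
- by move=> j; apply: nonneg_vecZ.
- under eq_bigr do rewrite scalerDl scale1r -scalerA.
  by rewrite big_split /= -scaler_sumr d0 scaler0 addr0.
- rewrite /value mulr_sumr -big_split /=; apply: eq_bigr => j _.
  by rewrite Fhom // mulrDl mul1r mulrA.
Qed.

(* Optimality at [s = 0] against [s = 1] and [s = -1] forces the slope to vanish. *)
Lemma optimal_shift xs (d : 'I_J -> R) : optimal xs ->
    \sum_j d j *: xs j = 0 -> (forall j, `|d j| <= 1) ->
  optimal (fun j => (1 - d j) *: xs j).
Proof.
move=> [xs_alloc xs_max] d0 d_le1.
have [|alloc_p value_p] := allocation_shift (s := 1) xs_alloc d0.
  by move=> j; have := d_le1 j; rewrite ler_norml mul1r; lra.
have [|alloc_m value_m] := allocation_shift (s := -1) xs_alloc d0.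
  by move=> j; have := d_le1 j; rewrite ler_norml mulN1r; lra.
have := xs_max _ alloc_p; rewrite value_p.
have -> : (fun j => (1 - d j) *: xs j) = (fun j => (1 + -1 * d j) *: xs j).
  by apply/funext => j; rewrite mulN1r.
split=> // ys /xs_max; rewrite value_m; lra.
Qed.

Lemma optimal_support_decr xs : optimal xs -> (N < #|support xs|)%N ->
  exists ys, optimal ys /\ (#|support ys| < #|support xs|)%N.
Proof.
move=> xs_opt ltNS.
have [|c [c0 [j1 cj1] c_supp]] := exists_linear_relation (S := support xs) xs.
  by rewrite dimvf [dim _]mul1n.
have [j0 _ c_max] := @arg_maxP _ _ 'I_J j1 predT (fun j => `|c j|) isT.
have cj0 : c j0 != 0 by rewrite -normr_gt0 (lt_le_trans _ (c_max j1 isT)) ?normr_gt0.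
pose d j := c j / c j0.
have d0 : \sum_j d j *: xs j = 0.
  under eq_bigr do rewrite /d mulrC -scalerA.
  by rewrite -scaler_sumr c0 scaler0.
have d_le1 j : `|d j| <= 1.
  by rewrite normrM normfV ler_pdivrMr ?normr_gt0 // mul1r; exact: c_max.
exists (fun j => (1 - d j) *: xs j); split; first exact: optimal_shift.
have supp_sub : support (fun j => (1 - d j) *: xs j) \subset support xs :\ j0.
  apply/fintype.subsetP => j; rewrite !inE; case: (eqVneq j j0) => [->|_] /=.
    by rewrite /d divff // subrr scale0r eqxx.
  by apply: contraNN => /eqP ->; rewrite scaler0.
apply: leq_ltn_trans (subset_leq_card supp_sub) _.
have j0_supp : j0 \in support xs by apply: contraNT cj0 => /c_supp ->.
by rewrite [X in (_ < X)%N](cardsD1 j0) j0_supp.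
Qed.

Lemma optimal_sparse xs : optimal xs ->
  exists ys, optimal ys /\ (#|support ys| <= N)%N.
Proof.
move: {2}#|_| (leqnn #|support xs|) => n; elim: n xs => [|n IHn] xs le_xs_n xs_opt.
  by exists xs; split => //; apply: leq_trans le_xs_n _.
case: (leqP #|support xs| N) => [le_xs_N | lt_N_xs]; first by exists xs.
have [ys [ys_opt lt_ys_xs]] := optimal_support_decr xs_opt lt_N_xs.
exact: IHn ys (leq_trans lt_ys_xs le_xs_n) ys_opt.
Qed.
End Sparsify.

Lemma allocation_le ys : allocation ys -> forall j i, ys j ord0 i <= x ord0 i.
Proof.
move=> [ys_ge0 <-] j i; rewrite summxE (bigD1 j) //= lerDl.
by apply: sumr_ge0 => k _; apply: ys_ge0.
Qed.

Section Existence.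
Hypotheses (Fusc : forall j, usc_orthant (F j))
  (Fmono : forall j y z, nonneg_vec y -> nonneg_vec z -> F j y <= F j (y + z)).

Lemma value_le_total ys : allocation ys -> value ys <= \sum_j F j x.
Proof.
move=> ys_alloc; apply: ler_sum => j _.
have rest_ge0 : nonneg_vec (x - ys j).
  by move=> i; rewrite !mxE subr_ge0 allocation_le.
by have := Fmono j (ys_alloc.1 j) rest_ge0; rewrite addrC subrK.
Qed.

(* Allocations are encoded as row vectors of vectors so that [rV_compact] applies. *)
Lemma exists_optimal (j0 : 'I_J) : nonneg_vec x -> exists xs, optimal xs.
Proof.
move=> x_ge0; pose cols (v : 'rV['rV[R]_N]_J) j := v ord0 j.
have colsK ys : cols (\row_j ys j) = ys by apply/funext => j; rewrite /cols mxE.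
pose box := [set w : 'rV[R]_N | forall i, `[0, x ord0 i]%classic (w ord0 i)]%classic.
pose K := ([set v : 'rV['rV[R]_N]_J | forall j, box (v ord0 j)]
            `&` [set v | \sum_j v ord0 j = x])%classic.
have K_alloc v : K v <-> allocation (cols v).
  split => [[v_box v_sum] | [v_ge0 v_sum]]; split => // j i.
    by have /andP[] := v_box j i.
  by rewrite /= in_itv /= v_ge0 (allocation_le (conj v_ge0 v_sum)).
have K_compact : compact K.
  apply: compact_closedI; last exact: closed_row_sum.
  apply: (@rV_compact _ J (fun=> box)) => _.
  apply: (@rV_compact _ N (fun i => `[0, x ord0 i]%classic)) => i.
  exact: segment_compact.
have [|||p /K_alloc p_alloc p_max] :=
  @compact_usc_max _ _ K (fun v => value (cols v)) K_compact.
- exists (\row_j if j == j0 then x else 0); apply/K_alloc; rewrite colsK; split.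
    by move=> j i; case: eqP => _; rewrite ?mxE.
  by rewrite (bigD1 j0) //= eqxx big1 ?addr0 // => j /negbTE ->.
- by exists (\sum_j F j x) => v /K_alloc; apply: value_le_total.
- move=> v /K_alloc v_alloc e e0.
  have e'0 : 0 < e / #|'I_J|.+1%:R by rewrite divr_gt0.
  have near_v j : \forall w \near v ord0 j,
      nonneg_vec w -> F j w < F j (v ord0 j) + e / #|'I_J|.+1%:R.
    have [d d0 usc_d] := Fusc j (v_alloc.1 j) e'0.
    by apply: filterS (nbhs_row_box _ d0) => w w_near w_ge0; apply: usc_d.
  apply: filterS (nbhs_row_coord near_v) => w w_near /K_alloc w_alloc.
  by apply: ltr_sum_eps => // j; apply: w_near; apply: w_alloc.1.
exists (cols p); split => // ys ys_alloc.
by rewrite -(colsK ys); apply: p_max; apply/K_alloc; rewrite colsK.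
Qed.
End Existence.
End Allocation.

Theorem proposition2 (R : realType) (N J : nat) (hN : (1 <= N)%N) (hJ : (1 <= J)%N)
  (F : 'I_J -> 'rV[R]_N -> R)
  (hFpos : forall j, nonneg_valued (F j))
  (hFusc : forall j, usc_orthant (F j))
  (hFconc : forall j, concave_orthant (F j))
  (hFhom : forall j, homogeneous1 (F j))
  (x : 'rV[R]_N) (hx : nonneg_vec x) :
  exists xs : 'I_J -> 'rV[R]_N,
    [/\ forall j, nonneg_vec (xs j),
        \sum_(j < J) xs j = x,
        (forall ys : 'I_J -> 'rV[R]_N, (forall j, nonneg_vec (ys j)) ->
           \sum_(j < J) ys j = x ->
           \sum_(j < J) F j (ys j) <= \sum_(j < J) F j (xs j))
      & (#|[set j : 'I_J | xs j != 0%R]| <= N)%N].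
Proof.
have Fmono j y z : nonneg_vec y -> nonneg_vec z -> F j y <= F j (y + z).
  exact: concave_homogeneous_monotone.
have [xs xs_opt] := exists_optimal hFusc Fmono (Ordinal hJ) hx.
have [ys [[[ys_ge0 ys_sum] ys_max] ys_sparse]] := optimal_sparse hFhom xs_opt.
by exists ys; split => // zs zs_ge0 zs_sum; apply: ys_max.
Qed.
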